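(* ${\bf K^\boxdot}$ is sound and strongly complete with respect to the class of serial bimodal frames (both $R_1$ and $R_2$ serial): for every $\Gamma\subseteq\mathcal{L}(\boxdot)$ and $\phi\in\mathcal{L}(\boxdot)$, $\Gamma\vdash_{{\bf K^\boxdot}}\phi$ iff $\phi$ is true at every state of every serial bimodal model at which all formulas of $\Gamma$ are true.
   Context: Fix a nonempty set $\mathbf{P}$ of propositional variables. A bimodal model is $\langle S,R_1,R_2,V\rangle$ with $S$ nonempty, $R_1,R_2\subseteq S\times S$, $V:\mathbf{P}\to\mathcal{P}(S)$. $\mathcal{L}(\boxdot):\ \phi::=p\mid\neg\phi\mid(\phi\wedge\phi)\mid\boxdot\phi$. Truth: $\mathcal{M},s\vDash\boxdot\phi$ iff for all $t,u$ with $sR_1t$ and $sR_2u$, ($\mathcal{M},t\vDash\phi\iff\mathcal{M},u\vDash\phi$); atoms and Booleans as usual. ${\bf K^\boxdot}$ has axioms: all instances of propositional tautologies; $\boxdot\top$; $\boxdot\phi\leftrightarrow\boxdot\neg\phi$; $\boxdot\phi\wedge\boxdot\psi\to\boxdot(\phi\wedge\psi)$; $\boxdot\phi\to\boxdot(\phi\vee\psi)\vee\boxdot(\neg\phi\vee\chi)$; and rules: modus ponens and RE: from $\phi\leftrightarrow\psi$ infer $\boxdot\phi\leftrightarrow\boxdot\psi$. *)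

From Stdlib Require Import List.
Import ListNotations.

Section Logic.
Variable P : Type.

Inductive form : Type :=
| Atom : P -> form
| Neg : form -> form
| And : form -> form -> form
| Dot : form -> form.

Definition Or (a b : form) : form := Neg (And (Neg a) (Neg b)).
Definition Imp (a b : form) : form := Neg (And a (Neg b)).
Definition Iff (a b : form) : form := And (Imp a b) (Imp b a).
Definition Top (p0 : P) : form := Neg (And (Atom p0) (Neg (Atom p0))).

(* Propositional tautologies: true under every Boolean valuation of the
   propositional skeleton, where atoms and ⊡-formulas are treated as
   propositional atoms. *)
Fixpoint beval (v : form -> bool) (f : form) : bool :=
  match f with
  | Atom _ => v f
  | Neg a => negb (beval v a)
  | And a b => andb (beval v a) (beval v b)
  | Dot _ => v f
  end.
Definition tautology (f : form) : Prop := forall v, beval v f = true.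

Inductive thm (p0 : P) : form -> Prop :=
| ax_taut : forall f, tautology f -> thm p0 f
| ax_top : thm p0 (Dot (Top p0))
| ax_neg : forall a, thm p0 (Iff (Dot a) (Dot (Neg a)))
| ax_and : forall a b, thm p0 (Imp (And (Dot a) (Dot b)) (Dot (And a b)))
| ax_or : forall a b c,
    thm p0 (Imp (Dot a) (Or (Dot (Or a b)) (Dot (Or (Neg a) c))))
| rule_mp : forall a b, thm p0 (Imp a b) -> thm p0 a -> thm p0 b
| rule_re : forall a b, thm p0 (Iff a b) -> thm p0 (Iff (Dot a) (Dot b)).

Fixpoint conj (p0 : P) (l : list form) : form :=
  match l with
  | [] => Top p0
  | a :: l' => And a (conj p0 l')
  end.

Definition derives (p0 : P) (Gamma : form -> Prop) (f : form) : Prop :=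
  exists l : list form, (forall a, In a l -> Gamma a) /\ thm p0 (Imp (conj p0 l) f).

Record model : Type := {
  st : Type;
  R1 : st -> st -> Prop;
  R2 : st -> st -> Prop;
  V : P -> st -> Prop
}.

Fixpoint sat (M : model) (s : st M) (f : form) : Prop :=
  match f with
  | Atom p => V M p s
  | Neg a => ~ sat M s a
  | And a b => sat M s a /\ sat M s b
  | Dot a => forall t u, R1 M s t -> R2 M s u -> (sat M t a <-> sat M u a)
  end.

Definition serial_model (M : model) : Prop :=
  (forall s, exists t, R1 M s t) /\ (forall s, exists t, R2 M s t).

Definition serial_consequence (Gamma : form -> Prop) (f : form) : Prop :=
  forall (M : model) (s : st M), serial_model M ->
    (forall a, Gamma a -> sat M s a) -> sat M s f.

End Logic.

Arguments Atom {P}. Arguments Neg {P}. Arguments And {P}. Arguments Dot {P}.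

From Pilot Require Import Defs.
From Stdlib Require Import List Bool Classical ClassicalEpsilon.
From mathcomp Require classical_sets.
Import ListNotations.
Set Bullet Behavior "Strict Subproofs".

(* Soundness: all axioms are valid on serial models (seriality is needed only
   for  ⊡a → ⊡(a∨b) ∨ ⊡(¬a∨c)), and modus ponens and RE preserve validity;
   since Γ ⊢ φ means that a finite conjunction of premises provably implies φ,
   derivability is truth preserving at every state.

   Completeness goes through a canonical model.  After the Hilbert-style
   bookkeeping (derived rules, deduction theorem, Lindenbaum's lemma from
   Zorn's lemma), the key notion is  forced s, for a maximal consistent set s:
   the formulas a with ⊡a ∈ s and ⊡(a∨g) ∈ s for every g.  It is closed under
   derivability; if ⊡a ∈ s then a or ¬a is forced, and if ⊡a ∉ s then
   forced s extends both to an MCS containing a and to one containing ¬a.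
   The canonical model has the MCSs as states and the same relation for both
   modalities: an MCS containing every ⊡-formula sees only itself, any other
   MCS s sees exactly the MCSs including forced s.  This model is serial and
   satisfies the truth lemma, so if Γ ⊬ φ then Γ ∪ {¬φ} holds at one of its
   states. *)

Ltac bool_cases :=
  repeat (simpl; match goal with
  | |- context [beval _ ?v ?x] => destruct (beval _ v x)
  | |- context [?v (Atom ?x)] => destruct (v (Atom x))
  | |- context [?v (Dot ?x)] => destruct (v (Dot x))
  end); simpl; try reflexivity.

Ltac taut := unfold tautology, Imp, Iff, Or, Top; let v := fresh "v" in intro v; bool_cases.

Lemma finite_subset_of_chain_union (T : Type) (X : T -> Prop)
    (F : classical_sets.set (classical_sets.set T)) :
  classical_sets.total_on F classical_sets.subset ->
  forall l : list T,
    (forall a, In a l -> X a \/ classical_sets.bigcup F (fun Y => Y) a) ->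
    (forall a, In a l -> X a) \/
    exists2 Y, F Y & forall a, In a l -> X a \/ Y a.
Proof.
  intros Hchain l. induction l as [|x l IH]; intro Hl.
  - left. intros a [].
  - destruct IH as [HX|[Y FY HY]]; [intros a Ha; apply Hl; right; exact Ha| |];
    destruct (Hl x (or_introl eq_refl)) as [Xx|[Z FZ Zx]].
    + left. intros a [<-|Ha]; auto.
    + right. exists Z; [exact FZ|]. intros a [<-|Ha]; auto.
    + right. exists Y; [exact FY|]. intros a [<-|Ha]; auto.
    + right. destruct (Hchain Y Z FY FZ) as [YZ|ZY].
      * exists Z; [exact FZ|]. intros a [<-|Ha]; [auto|].
        destruct (HY a Ha); auto.
      * exists Y; [exact FY|]. intros a [<-|Ha]; auto.
Qed.

Section Completeness.
Variable P : Type.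
Variable p0 : P.
Notation F := (form P).
Notation thm := (thm P p0).
Notation Imp := (Imp P).
Notation Iff := (Iff P).
Notation Or := (Or P).
Notation T := (Top P p0).
Notation Bot := (Neg (Top P p0)).
Notation conj := (conj P p0).
Notation derives := (derives P p0).
Notation tautology := (tautology P).

Lemma thm_taut_mp a b : thm a -> tautology (Imp a b) -> thm b.
Proof. intros Ha Ht. eapply rule_mp; [apply ax_taut, Ht | exact Ha]. Qed.

Lemma thm_taut_mp2 a b c :
  thm a -> thm b -> tautology (Imp a (Imp b c)) -> thm c.
Proof. intros Ha Hb Ht. apply (rule_mp P p0 b c); [apply (thm_taut_mp a) | ]; assumption. Qed.

Lemma beval_conj_app v l1 l2 :
  beval P v (conj (l1 ++ l2)) = beval P v (conj l1) && beval P v (conj l2).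
Proof.
  induction l1 as [|a l IH]; simpl.
  - destruct (v (Atom p0)); reflexivity.
  - rewrite IH. apply andb_assoc.
Qed.

Lemma derives_thm X f : thm f -> derives X f.
Proof. intro H. exists []. split; [intros a []|]. eapply thm_taut_mp; [exact H|taut]. Qed.

Lemma derives_mem X f : X f -> derives X f.
Proof. intro H. exists [f]. split; [intros a [<-|[]]; exact H|]. apply ax_taut. taut. Qed.

Lemma derives_mono (X Y : F -> Prop) f :
  (forall a, X a -> Y a) -> derives X f -> derives Y f.
Proof. intros H [l [Hl Tl]]. exists l. split; auto. Qed.

Lemma derives_and X a b : derives X a -> derives X b -> derives X (And a b).
Proof.
  intros [l1 [H1 T1]] [l2 [H2 T2]]. exists (l1 ++ l2). split.
  - intros x Hx. apply in_app_or in Hx. destruct Hx; auto.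
  - eapply thm_taut_mp2; [exact T1 | exact T2 |].
    unfold tautology, Imp. intro v. simpl. rewrite beval_conj_app. bool_cases.
Qed.

Lemma derives_mp X a b : derives X a -> thm (Imp a b) -> derives X b.
Proof.
  intros [l [Hl Tl]] Hab. exists l. split; [exact Hl|].
  eapply thm_taut_mp2; [exact Tl | exact Hab | taut].
Qed.

Lemma derives_taut2 X a b c :
  derives X a -> derives X b -> tautology (Imp (And a b) c) -> derives X c.
Proof. intros Ha Hb Ht. apply (derives_mp X (And a b)); [apply derives_and | apply ax_taut]; assumption. Qed.

Lemma split_premises (X : F -> Prop) a l :
  (forall x, In x l -> X x \/ x = a) ->
  exists l', (forall x, In x l' -> X x) /\ thm (Imp (conj l') (Imp a (conj l))).
Proof.
  induction l as [|x l IH]; intro H.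
  - exists []. split; [intros _ []|]. apply ax_taut. taut.
  - destruct IH as [l' [H1 T1]]; [intros y Hy; apply H; right; exact Hy|].
    destruct (H x (or_introl eq_refl)) as [Hx|<-].
    + exists (x :: l'). split; [intros y [<-|Hy]; auto|].
      eapply thm_taut_mp; [exact T1|taut].
    + exists l'. split; [exact H1|]. eapply thm_taut_mp; [exact T1|taut].
Qed.

Lemma deduction (X : F -> Prop) a b :
  derives (fun f => X f \/ f = a) b -> derives X (Imp a b).
Proof.
  intros [l [H1 T1]]. destruct (split_premises X a l H1) as [l' [H2 T2]].
  exists l'. split; [exact H2|]. eapply thm_taut_mp2; [exact T2 | exact T1 | taut].
Qed.

Definition consistent (X : F -> Prop) : Prop := ~ derives X Bot.
Definition MCS (X : F -> Prop) : Prop := consistent X /\ forall f, X f \/ X (Neg f).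

Section MaximalConsistent.
Variable X : F -> Prop.
Hypothesis HX : MCS X.

Lemma mcs_derives f : derives X f -> X f.
Proof.
  intro H. destruct HX as [Hc Hm]. destruct (Hm f) as [|Hn]; auto.
  exfalso. apply Hc. eapply derives_taut2; [exact H | apply derives_mem, Hn | taut].
Qed.

Lemma mcs_thm f : thm f -> X f.
Proof. intro H. apply mcs_derives, derives_thm, H. Qed.

Lemma mcs_mp a b : thm (Imp a b) -> X a -> X b.
Proof. intros H Ha. apply mcs_derives. eapply derives_mp; [apply derives_mem, Ha | exact H]. Qed.

Lemma mcs_neg f : X (Neg f) <-> ~ X f.
Proof.
  split.
  - intros H1 H2. apply (proj1 HX).
    eapply derives_taut2; [apply derives_mem, H1 | apply derives_mem, H2 | taut].
  - intro H. destruct (proj2 HX f); tauto.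
Qed.

Lemma mcs_and a b : X (And a b) <-> X a /\ X b.
Proof.
  split.
  - intro H. split; apply (mcs_mp (And a b)); auto; apply ax_taut; taut.
  - intros [H1 H2]. apply mcs_derives.
    eapply derives_taut2; [apply derives_mem, H1 | apply derives_mem, H2 | taut].
Qed.

Lemma mcs_or a b : X (Or a b) -> X a \/ X b.
Proof.
  unfold Defs.Or. rewrite mcs_neg, mcs_and, !mcs_neg.
  destruct (classic (X a)); tauto.
Qed.

Lemma mcs_re a b : thm (Iff a b) -> X (Dot a) -> X (Dot b).
Proof. intros H. apply mcs_mp. eapply thm_taut_mp; [apply rule_re, H | taut]. Qed.

End MaximalConsistent.

(* Zorn's lemma
   yields a set A maximal with X ∪ A consistent; adding any formula outside
   X ∪ A makes it inconsistent, which forces f or ¬f into X ∪ A. *)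
Lemma lindenbaum (X : F -> Prop) :
  consistent X -> exists M, MCS M /\ forall f, X f -> M f.
Proof.
  intro HX.
  destruct (@classical_sets.Zorn_bigcup F
              (fun A => consistent (fun f => X f \/ A f))) as [A [HA Hmax]].
  { intros C HC Hchain [l [Hl Tl]].
    destruct (finite_subset_of_chain_union F X C Hchain l Hl) as [HlX|[Y CY HY]].
    - apply HX. exists l. split; assumption.
    - apply (HC Y CY). exists l. split; assumption. }
  set (M := fun f => X f \/ A f).
  assert (Hblock : forall g, ~ M g -> derives M (Imp g Bot)).
  { intros g Hg. apply deduction. apply NNPP. intro Hc.
    apply (Hmax (fun f => A f \/ f = g)).
    - split; [intros f Hf; left; exact Hf|]. intro Hsub.
      apply Hg. right. apply Hsub. right. reflexivity.
    - intro Hd. apply Hc. eapply derives_mono; [|exact Hd].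
      intros f [Hf|[Hf|Hf]]; unfold M; tauto. }
  exists M. split; [split|intros f Hf; left; exact Hf].
  - exact HA.
  - intro f. apply NNPP. intro Hn. apply HA.
    eapply derives_taut2; [apply (Hblock f) | apply (Hblock (Neg f)) | taut]; tauto.
Qed.

(* [forced s a]: ⊡a ∈ s and ⊡(a∨g) ∈ s for every g.  In the canonical model
   these are exactly the formulas true at every successor of s. *)
Definition forced (s : F -> Prop) (a : F) : Prop :=
  s (Dot a) /\ forall g, s (Dot (Or a g)).

(* s contains every ⊡-formula; in the canonical model such an s sees only
   itself, which makes every ⊡-formula true there. *)
Definition all_dot (s : F -> Prop) : Prop := forall f, s (Dot f).

Section Forced.
Variable s : F -> Prop.
Hypothesis Hs : MCS s.

(* [forced s] is a filter closed under provable implication (axioms ⊡⊤ and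
   ⊡a ∧ ⊡b → ⊡(a∧b) with RE), hence under derivability. *)
Lemma forced_top : forced s T.
Proof.
  assert (HT : s (Dot T)) by (apply mcs_thm; [exact Hs | apply ax_top]).
  split; [exact HT|]. intro g. apply (mcs_re s Hs T); [apply ax_taut; taut | exact HT].
Qed.

Lemma forced_and a b : forced s a -> forced s b -> forced s (And a b).
Proof.
  intros [A1 A2] [B1 B2]. split.
  - apply (mcs_mp s Hs (And (Dot a) (Dot b))); [apply ax_and | apply mcs_and; auto].
  - intro g. apply (mcs_re s Hs (And (Or a g) (Or b g))); [apply ax_taut; taut|].
    apply (mcs_mp s Hs (And (Dot (Or a g)) (Dot (Or b g)))); [apply ax_and | apply mcs_and; auto].
Qed.

Lemma forced_mono a b : forced s a -> thm (Imp a b) -> forced s b.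
Proof.
  intros [A1 A2] H. split.
  - apply (mcs_re s Hs (Or a b)); [eapply thm_taut_mp; [exact H | taut] | apply A2].
  - intro g. apply (mcs_re s Hs (Or a (Or b g))); [eapply thm_taut_mp; [exact H | taut] | apply A2].
Qed.

Lemma forced_derives f : derives (forced s) f -> forced s f.
Proof.
  intros [l [Hl Tl]]. apply (forced_mono (conj l)); [clear Tl | exact Tl].
  induction l as [|x l IH]; simpl.
  - apply forced_top.
  - apply forced_and; [apply Hl; left; reflexivity | apply IH; intros a Ha; apply Hl; right; exact Ha].
Qed.

(* If ⊡a ∈ s, the value of a is settled: a or ¬a is forced.  Otherwise some
   ⊡(a∨g) ∉ s, and the axiom ⊡a → ⊡(a∨g) ∨ ⊡(¬a∨h) gives ⊡(¬a∨h) ∈ s for all h. *)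
Lemma forced_dichotomy a : s (Dot a) -> forced s a \/ forced s (Neg a).
Proof.
  intro Ha. destruct (classic (forced s a)) as [|Hn]; [left; assumption | right].
  assert (Hg : exists g, ~ s (Dot (Or a g))).
  { apply NNPP. intro Hc. apply Hn. split; [exact Ha|].
    intro g. apply NNPP. intro Hg. apply Hc. exists g. exact Hg. }
  destruct Hg as [g Hg]. split.
  - apply (mcs_mp s Hs (Dot a)); [eapply thm_taut_mp; [apply (ax_neg P p0 a) | taut] | exact Ha].
  - intro h. destruct (mcs_or s Hs _ _ (mcs_mp s Hs _ _ (ax_or P p0 a g h) Ha)); tauto.
Qed.

Lemma forced_consistent_with a c :
  ~ s (Dot a) -> c = a \/ c = Neg a -> consistent (fun h => forced s h \/ h = c).
Proof.
  intros Hn Hc Hd. apply deduction, forced_derives in Hd.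
  assert (Hnc : s (Dot (Neg c))) by (apply (forced_mono _ _ Hd), ax_taut; taut).
  assert (Hdc : s (Dot c))
    by (apply (mcs_mp s Hs (Dot (Neg c))); [eapply thm_taut_mp; [apply (ax_neg P p0 c) | taut] | exact Hnc]).
  apply Hn. destruct Hc as [->| ->]; [exact Hdc|].
  apply (mcs_mp s Hs (Dot (Neg a))); [eapply thm_taut_mp; [apply (ax_neg P p0 a) | taut] | exact Hdc].
Qed.

End Forced.

Definition cstate : Type := {s : F -> Prop | MCS s}.

Definition crel (s t : cstate) : Prop :=
  (all_dot (proj1_sig s) -> t = s) /\
  (~ all_dot (proj1_sig s) -> forall g, forced (proj1_sig s) g -> proj1_sig t g).

Definition cmodel : model P :=
  {| st := cstate; R1 := crel; R2 := crel; V := fun p s => proj1_sig s (Atom p) |}.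

Lemma crel_witness (s : cstate) a c :
  ~ proj1_sig s (Dot a) -> c = a \/ c = Neg a -> exists t, crel s t /\ proj1_sig t c.
Proof.
  intros Hn Hc.
  destruct (lindenbaum _ (forced_consistent_with _ (proj2_sig s) a c Hn Hc)) as [t [Ht Hsub]].
  exists (exist _ t Ht). split; [split|]; simpl.
  - intro Hall. exfalso. apply Hn, Hall.
  - intros _ g Hg. apply Hsub. left. exact Hg.
  - apply Hsub. right. reflexivity.
Qed.

Lemma cmodel_serial : serial_model P cmodel.
Proof.
  assert (H : forall s : cstate, exists t, crel s t).
  { intro s. destruct (classic (all_dot (proj1_sig s))) as [Hall|Hall].
    - exists s. split; [reflexivity | tauto].
    - destruct (not_all_ex_not _ _ Hall) as [a Ha].
      destruct (crel_witness s a a Ha (or_introl eq_refl)) as [t [Ht _]].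
      exists t. exact Ht. }
  split; exact H.
Qed.

Section TruthDot.
Variable a : F.
Hypothesis IH : forall t : cstate, sat P cmodel t a <-> proj1_sig t a.

Lemma truth_dot_intro (s : cstate) : proj1_sig s (Dot a) -> sat P cmodel s (Dot a).
Proof.
  intros Ha t u [Ht1 Ht2] [Hu1 Hu2]. simpl in *. rewrite !IH.
  destruct (classic (all_dot (proj1_sig s))) as [Hall|Hall].
  - rewrite (Ht1 Hall), (Hu1 Hall). tauto.
  - destruct (forced_dichotomy _ (proj2_sig s) a Ha) as [Hf|Hf].
    + split; intros _; [apply Hu2 | apply Ht2]; assumption.
    + assert (Nt := Ht2 Hall _ Hf). assert (Nu := Hu2 Hall _ Hf).
      rewrite mcs_neg in Nt by apply (proj2_sig t).
      rewrite mcs_neg in Nu by apply (proj2_sig u). tauto.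
Qed.

Lemma truth_dot_elim (s : cstate) : sat P cmodel s (Dot a) -> proj1_sig s (Dot a).
Proof.
  intro H. apply NNPP. intro Hn.
  destruct (crel_witness s a a Hn (or_introl eq_refl)) as [t [Ht Hta]].
  destruct (crel_witness s a (Neg a) Hn (or_intror eq_refl)) as [u [Hu Hua]].
  rewrite mcs_neg in Hua by apply (proj2_sig u).
  apply Hua, IH, (H t u Ht Hu), IH, Hta.
Qed.

End TruthDot.

Lemma truth_lemma f : forall s : cstate, sat P cmodel s f <-> proj1_sig s f.
Proof.
  induction f as [p|a IH|a IHa b IHb|a IH]; intro s; simpl.
  - reflexivity.
  - rewrite IH, mcs_neg; [reflexivity | apply (proj2_sig s)].
  - rewrite IHa, IHb, mcs_and; [reflexivity | apply (proj2_sig s)].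
  - split; [apply truth_dot_elim | apply truth_dot_intro]; exact IH.
Qed.

(* Strong completeness: if Γ ⊬ φ, then Γ ∪ {¬φ} is consistent and holds at
   a state of the serial canonical model. *)
Lemma strong_completeness (Gamma : F -> Prop) (phi : F) :
  serial_consequence P Gamma phi -> derives Gamma phi.
Proof.
  intro H. apply NNPP. intro Hn.
  assert (Hc : consistent (fun f => Gamma f \/ f = Neg phi)).
  { intro Hd. apply deduction in Hd. apply Hn.
    eapply derives_mp; [exact Hd | apply ax_taut; taut]. }
  destruct (lindenbaum _ Hc) as [M [HM Hsub]].
  set (s := exist MCS M HM : cstate).
  assert (Hphi : proj1_sig s phi).
  { apply truth_lemma, H; [exact cmodel_serial|].
    intros a Ha. apply truth_lemma, Hsub. left. exact Ha. }
  apply (proj1 (mcs_neg M HM phi)); [apply Hsub; right; reflexivity | exact Hphi].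
Qed.

End Completeness.

Section Soundness.
Variable P : Type.
Variable M : model P.
Notation sat := (sat P M).

Lemma sat_imp s a b : sat s (Imp P a b) <-> (sat s a -> sat s b).
Proof. simpl. split; [intros H Ha; apply NNPP; tauto | tauto]. Qed.

Lemma sat_iff s a b : sat s (Iff P a b) <-> (sat s a <-> sat s b).
Proof. simpl. destruct (classic (sat s a)), (classic (sat s b)); tauto. Qed.

Lemma sat_or s a b : sat s (Or P a b) <-> sat s a \/ sat s b.
Proof. simpl. destruct (classic (sat s a)); tauto. Qed.

(* The truth values of formulas at a state form a Boolean valuation of their
   propositional skeletons, so tautologies hold everywhere. *)
Lemma tautology_valid s f : tautology P f -> sat s f.
Proof.
  intro Ht.
  set (v := fun g => if excluded_middle_informative (sat s g) then true else false).
  assert (Hv : forall g, beval P v g = true <-> sat s g).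
  { induction g as [p|a IH|a IHa b IHb|a IH]; simpl;
      try (unfold v; destruct (excluded_middle_informative _); split; intro; auto; discriminate).
    - rewrite <- IH. destruct (beval P v a); simpl; split; intro; try discriminate; tauto.
    - rewrite <- IHa, <- IHb.
      destruct (beval P v a), (beval P v b); simpl; split; intro; try discriminate; tauto. }
  apply Hv, Ht.
Qed.

Lemma dot_of_uniform s b (v : Prop) :
  (forall t, R1 P M s t -> (sat t b <-> v)) -> (forall u, R2 P M s u -> (sat u b <-> v)) ->
  sat s (Dot b).
Proof. intros H1 H2 t u Ht Hu. rewrite (H1 t Ht), (H2 u Hu). reflexivity. Qed.

Lemma uniform_of_dot s a :
  (exists t, R1 P M s t) -> (exists u, R2 P M s u) -> sat s (Dot a) ->
  exists v : Prop, (forall t, R1 P M s t -> (sat t a <-> v)) /\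
                   (forall u, R2 P M s u -> (sat u a <-> v)).
Proof.
  intros [t0 Ht0] [u0 Hu0] Ha. exists (sat t0 a). split.
  - intros t Ht. rewrite (Ha t u0 Ht Hu0), (Ha t0 u0 Ht0 Hu0). reflexivity.
  - intros u Hu. symmetry. exact (Ha t0 u Ht0 Hu).
Qed.

Lemma ax_neg_valid s a : sat s (Iff P (Dot a) (Dot (Neg a))).
Proof.
  rewrite sat_iff. simpl.
  split; intros H t u Ht Hu; specialize (H t u Ht Hu); tauto.
Qed.

Lemma ax_and_valid s a b : sat s (Imp P (And (Dot a) (Dot b)) (Dot (And a b))).
Proof.
  rewrite sat_imp. intros [Ha Hb] t u Ht Hu. simpl.
  rewrite (Ha t u Ht Hu), (Hb t u Ht Hu). reflexivity.
Qed.

Lemma ax_or_valid s a b c :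
  serial_model P M ->
  sat s (Imp P (Dot a) (Or P (Dot (Or P a b)) (Dot (Or P (Neg a) c)))).
Proof.
  intros [HS1 HS2]. rewrite sat_imp, sat_or. intro Ha.
  destruct (uniform_of_dot s a (HS1 s) (HS2 s) Ha) as [v [H1 H2]].
  destruct (classic v) as [Hv|Hv]; [left | right];
    apply (dot_of_uniform _ _ True); intros x Hx;
    rewrite sat_or; simpl; first [rewrite (H1 x Hx) | rewrite (H2 x Hx)]; tauto.
Qed.

Lemma re_valid a b :
  (forall s, sat s (Iff P a b)) -> forall s, sat s (Iff P (Dot a) (Dot b)).
Proof.
  intros H s. rewrite sat_iff. simpl.
  assert (E : forall x, sat x a <-> sat x b) by (intro x; apply sat_iff, H).
  split; intros Hd t u Ht Hu; [rewrite <- !E | rewrite !E]; apply Hd; assumption.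
Qed.

End Soundness.

Lemma thm_valid (P : Type) (p0 : P) f :
  thm P p0 f -> forall M, serial_model P M -> forall s, sat P M s f.
Proof.
  intros H M HM. induction H as [f Ht| |a|a b|a b c|a b _ IHab _ IHa|a b _ IH]; intro s.
  - apply tautology_valid, Ht.
  - simpl. tauto.
  - apply ax_neg_valid.
  - apply ax_and_valid.
  - apply ax_or_valid, HM.
  - apply (sat_imp P M s a b); [apply IHab | apply IHa].
  - apply re_valid, IH.
Qed.

Lemma sat_conj (P : Type) (p0 : P) M s l :
  (forall a, In a l -> sat P M s a) -> sat P M s (conj P p0 l).
Proof.
  induction l as [|x l IH]; intro Hl; simpl.
  - tauto.
  - split; [apply Hl; left; reflexivity | apply IH; intros a Ha; apply Hl; right; exact Ha].
Qed.

Lemma soundness (P : Type) (p0 : P) Gamma phi :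
  derives P p0 Gamma phi -> serial_consequence P Gamma phi.
Proof.
  intros [l [Hl Tl]] M s HM HG.
  apply (sat_imp P M s (conj P p0 l)); [apply (thm_valid P p0 _ Tl M HM) |].
  apply sat_conj. intros a Ha. apply HG, Hl, Ha.
Qed.

Theorem mainTheorem11 (P : Type) (p0 : P) (Gamma : form P -> Prop) (phi : form P) :
  derives P p0 Gamma phi <-> serial_consequence P Gamma phi.
Proof.
  split; [apply soundness | apply strong_completeness].
Qed.
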